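(* Let $h,n,k\geq2$ be integers with $k\leq n!$. Then $\{V\times\{id\}: V\in\mathrm{BGR}_h(k)\}\subseteq\mathrm{SPFAG}_h(n)$. If $k=n=2$, equality holds: $\{V\times\{id\}: V\in\mathrm{BGR}_h(2)\}=\mathrm{SPFAG}_h(2)$, and consequently $\{V\times\{id\}: V\in\bigcup_{h\geq2}\mathrm{BGR}_h(2)\}=\bigcup_{h\geq2}\mathrm{SPFAG}_h(2)$.
   Context: A $k$-valued Boolean function is a function $f:\{0,1\}^h\to\{0,\dots,k-1\}$. For $\varphi\in S_h$ and $x\in\{0,1\}^h$, $x^\varphi=(x_{\varphi^{-1}(1)},\dots,x_{\varphi^{-1}(h)})$; the invariance group of $f$ is $S(f)=\{\varphi\in S_h: f(x^\varphi)=f(x)\ \forall x\}$; $\mathrm{BGR}_h(k)=\{S(f): f \text{ a } k\text{-valued Boolean function on }\{0,1\}^h\}$. Permutations compose as $(\sigma\tau)(x)=\sigma(\tau(x))$. Let $G=S_h\times S_n$ and $\mathcal{P}=(S_n)^h$ (preference profiles), with $G$ acting by $(p^{(\varphi,\psi)})_i=\psi\,p_{\varphi^{-1}(i)}$. A social preference function (SPF) is any $F:\mathcal{P}\to S_n$; $G(F)=\{(\varphi,\psi)\in G: F(p^{(\varphi,\psi)})=\psi F(p)\ \forall p\}$ and $G_1(F)=G(F)\cap(S_h\times\{id\})$. $\mathrm{SPFAG}_h(n)$ is the set of subgroups $U\leq S_h\times\{id\}$ with $U=G_1(F)$ for some SPF $F$ on $(S_n)^h$. *)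

From mathcomp Require Import all_boot all_fingroup.
Set Implicit Arguments. Unset Strict Implicit. Unset Printing Implicit Defensive.
Local Open Scope group_scope.

Definition bvec (h : nat) := {ffun 'I_h -> bool}.

(* Composition in the paper's convention: (compp s t) x = s (t x).
   (MathComp's product s * t is "first s, then t".) *)
Definition compp (n : nat) (s t : 'S_n) : 'S_n := t * s.

Lemma comppE n (s t : 'S_n) x : compp s t x = s (t x).
Proof. by rewrite /compp permM. Qed.

Definition bact (h : nat) (x : bvec h) (phi : 'S_h) : bvec h :=
  [ffun i => x (phi^-1 i)].

Definition invgroup (h k : nat) (f : bvec h -> 'I_k) : {set 'S_h} :=
  [set phi | [forall x : bvec h, f (bact x phi) == f x]].

Definition BGR (h k : nat) (V : {set 'S_h}) : Prop :=
  exists f : bvec h -> 'I_k, invgroup f = V.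

Definition profile (h n : nat) := {ffun 'I_h -> 'S_n}.

Definition pact (h n : nat) (p : profile h n) (phi : 'S_h) (psi : 'S_n)
  : profile h n := [ffun i => compp psi (p (phi^-1 i))].

Definition Gsym (h n : nat) (F : profile h n -> 'S_n) : {set 'S_h * 'S_n} :=
  [set g | [forall p : profile h n, F (pact p g.1 g.2) == compp g.2 (F p)]].

Definition G1sym (h n : nat) (F : profile h n -> 'S_n) : {set 'S_h * 'S_n} :=
  Gsym F :&: setX [set: 'S_h] [set 1].

Definition SPFAG (h n : nat) (U : {set 'S_h * 'S_n}) : Prop :=
  exists F : profile h n -> 'S_n, G1sym F = U.

Definition times_id (h n : nat) (V : {set 'S_h}) : {set 'S_h * 'S_n} :=
  setX V [set 1].

Arguments BGR h k V : clear implicits.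
Arguments SPFAG h n U : clear implicits.
Arguments times_id {h} n V.

(* With psi = id, the profile action is just the permutation of coordinates, so
   G_1(F) = S(F) x {id} where S(F) is the invariance group of F viewed as a
   function of h coordinates in S_n.  Invariance groups of functions of h
   coordinates do not shrink when the codomain is enlarged by an injection, nor
   when the coordinate alphabet is enlarged by an injection e (precompose with a
   retraction of e).  For h coordinates in bool and values in 'I_k, both
   alphabet and codomain embed into S_n when 2 <= k <= n!; for n = 2 the maps
   go back since |S_2| = |bool| = 2. *)
From mathcomp Require Import all_boot all_fingroup.
Set Implicit Arguments. Unset Strict Implicit. Unset Printing Implicit Defensive.
Local Open Scope group_scope.

Definition coord_perm (T : Type) (h : nat) (x : {ffun 'I_h -> T}) (phi : 'S_h)
  : {ffun 'I_h -> T} := [ffun i => x (phi^-1 i)].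

Definition coord_invariance (T : finType) (R : eqType) (h : nat)
    (f : {ffun 'I_h -> T} -> R) : {set 'S_h} :=
  [set phi | [forall x, f (coord_perm x phi) == f x]].

Lemma G1symE (h n : nat) (F : profile h n -> 'S_n) :
  G1sym F = times_id n (coord_invariance F).
Proof.
apply/setP => -[phi psi]; rewrite !inE /=.
have [->|] := eqVneq psi 1; last by rewrite !andbF.
have pact1 p : pact p phi 1 = coord_perm p phi.
  by apply/ffunP => i; rewrite !ffunE /compp mulg1.
by rewrite !andbT; apply/eq_forallb => p; rewrite pact1 /compp mulg1.
Qed.

Lemma coord_invariance_comp (h : nat) (T : finType) (R R' : eqType) (g : R -> R')
    (f : {ffun 'I_h -> T} -> R) :
  injective g -> coord_invariance (g \o f) = coord_invariance f.
Proof.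
move=> g_inj; apply/setP => phi; rewrite !inE.
by apply/eq_forallb => x /=; rewrite (inj_eq g_inj).
Qed.

Lemma coord_invariance_retract (h : nat) (T T' : finType) (R : eqType)
    (e : T -> T') (r : T' -> T) (f : {ffun 'I_h -> T} -> R) :
  cancel e r ->
  coord_invariance (fun x : {ffun 'I_h -> T'} => f [ffun i => r (x i)])
  = coord_invariance f.
Proof.
move=> eK; apply/setP => phi; rewrite !inE.
have map_perm (x : {ffun 'I_h -> T'}) :
    [ffun i => r (coord_perm x phi i)] = coord_perm [ffun i => r (x i)] phi.
  by apply/ffunP => i; rewrite !ffunE.
apply/forallP/forallP => inv_f x; last by rewrite map_perm.
have rK : [ffun i => r ([ffun j => e (x j)] i)] = x.
  by apply/ffunP => i; rewrite !ffunE eK.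
by have := inv_f [ffun i => e (x i)]; rewrite map_perm rK.
Qed.

Lemma card_le_inj (A B : finType) :
  #|A| <= #|B| -> {e : A -> B | injective e}.
Proof.
move=> leAB; exists (fun a => enum_val (widen_ord leAB (enum_rank a))).
by move=> a b /enum_val_inj /(congr1 val) /= /val_inj /enum_rank_inj.
Qed.

Lemma inj_retract (A B : finType) (a0 : A) (e : A -> B) :
  injective e -> cancel e (fun b => odflt a0 [pick a | e a == b]).
Proof.
move=> e_inj a; case: pickP => [a' /eqP /e_inj //|].
by move/(_ a); rewrite eqxx.
Qed.

Lemma coord_invariance_embed (h : nat) (T T' R R' : finType)
    (f : {ffun 'I_h -> T} -> R) :
  0 < #|T| -> #|T| <= #|T'| -> #|R| <= #|R'| ->
  exists f' : {ffun 'I_h -> T'} -> R', coord_invariance f' = coord_invariance f.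
Proof.
case/card_gt0P => a0 _ /card_le_inj[e e_inj] /card_le_inj[g g_inj].
pose r b := odflt a0 [pick a | e a == b].
exists (g \o (fun x => f [ffun i => r (x i)])).
rewrite coord_invariance_comp //.
exact: coord_invariance_retract (inj_retract a0 e_inj).
Qed.

Lemma SPFAG_times_id_BGR (h n k : nat) (V : {set 'S_h}) :
  2 <= k -> k <= n`! -> BGR h k V -> SPFAG h n (times_id n V).
Proof.
move=> k_ge2 k_le [f <-].
have [|||F FE] := coord_invariance_embed (T' := 'S_n) (R' := 'S_n) f.
- by rewrite card_bool.
- by rewrite card_bool card_Sn (leq_trans k_ge2).
- by rewrite card_ord card_Sn.
by exists F; rewrite G1symE FE.
Qed.

Lemma SPFAG2E (h : nat) (U : {set 'S_h * 'S_2}) :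
  SPFAG h 2 U <-> exists V : {set 'S_h}, BGR h 2 V /\ U = times_id 2 V.
Proof.
split; last by case=> V [BGR_V ->]; apply: SPFAG_times_id_BGR BGR_V.
case=> F <-.
have [|||f fE] := coord_invariance_embed (T' := bool) (R' := 'I_2) F.
- by rewrite card_Sn.
- by rewrite card_Sn card_bool.
- by rewrite card_Sn card_ord.
by exists (coord_invariance F); split; [exists f | rewrite G1symE].
Qed.

Theorem mainTheorem19 (h n k : nat) :
  2 <= h -> 2 <= n -> 2 <= k -> k <= n`! ->
  (forall V : {set 'S_h}, BGR h k V -> SPFAG h n (times_id n V))
  /\ (k = 2 -> n = 2 ->
      (forall U : {set 'S_h * 'S_n},
         SPFAG h n U <-> exists V : {set 'S_h}, BGR h 2 V /\ U = times_id n V)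
      /\ (forall U : {h' : nat & {set 'S_h' * 'S_n}},
            (2 <= projT1 U /\ SPFAG (projT1 U) n (projT2 U)) <->
            (2 <= projT1 U /\ exists V : {set 'S_(projT1 U)},
                 BGR (projT1 U) 2 V /\ projT2 U = times_id n V))).
Proof.
move=> _ _ k_ge2 k_le; split; first by move=> V; apply: SPFAG_times_id_BGR.
move=> _ ->; split; first exact: SPFAG2E.
by move=> [h' U] /=; split=> -[h'_ge2 /SPFAG2E]; split.
Qed.
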